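(* The code $\mathcal C_3(\mathbb D_d)$ is contained in the ternary fourth-order (extended) generalized Reed–Muller code $\mathcal R_3(4,2m)$.
   Context: Let $m\ge 2$ be an integer. For $s\in\{m,2m\}$ let $\mathrm{Tr}_s:\mathbb F_{3^s}\to\mathbb F_3$ denote the absolute trace. Vectors in $\mathbb F_3^{3^{2m}}$ are indexed by $\mathbb F_{3^{2m}}$, and a function $f:\mathbb F_{3^{2m}}\to\mathbb F_3$ is identified with $(f(t))_{t\in\mathbb F_{3^{2m}}}$. Let $\mathcal C(2m,3)=\{(\mathrm{Tr}_{2m}(at^{3^m+1}+bt)+h)_{t\in\mathbb F_{3^{2m}}}: a\in\mathbb F_{3^m}, b\in\mathbb F_{3^{2m}}, h\in\mathbb F_3\}$, let $d$ be its minimum nonzero Hamming weight, let $\mathbb D_d$ be the incidence structure on $\mathbb F_{3^{2m}}$ whose blocks are the supports of the weight-$d$ codewords, and let $\mathcal C_3(\mathbb D_d)$ be the $\mathbb F_3$-span of the incidence vectors of the blocks. Fix an $\mathbb F_3$-basis of $\mathbb F_{3^{2m}}$, identifying $\mathbb F_{3^{2m}}$ with $\mathbb F_3^{2m}$; $\mathcal R_3(r,2m)$ denotes the set of functions $\mathbb F_3^{2m}\to\mathbb F_3$ given by polynomials over $\mathbb F_3$ in $2m$ variables of total degree at most $r$ (equivalently, the extension by an overall parity check of the punctured generalized Reed–Muller code of order $r$ over $\mathbb F_3$ of length $3^{2m}-1$). *)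

From HB Require Import structures.
From mathcomp Require Import all_boot all_order all_algebra all_field.
From mathcomp Require Import mpoly.
Set Implicit Arguments. Unset Strict Implicit. Unset Printing Implicit Defensive.
Import GRing.Theory.
Local Open Scope ring_scope.

Section Defs.
Variable L : finFieldType.

Definition trace3 (s : nat) (x : L) : L := \sum_(i < s) x ^+ (3 ^ i).

(* the natural embedding F_3 -> L (meaningful when char L = 3) *)
Definition F3toL (c : 'F_3) : L := (nat_of_ord c)%:R.

(* the inverse of the embedding on the prime subfield (0 elsewhere) *)
Definition LtoF3 (x : L) : 'F_3 :=
  odflt 0 [pick c : 'F_3 | F3toL c == x].

Local Notation vecL := {ffun L -> 'F_3}.

Definition codeC (m : nat) : {set vecL} :=
  [set c : vecL | [exists a : L, exists b : L, exists h : 'F_3,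
     (a ^+ (3 ^ m) == a) &&
     [forall t : L, c t == LtoF3 (trace3 (2 * m) (a * t ^+ (3 ^ m + 1) + b * t)) + h]]].

Definition wt (c : vecL) : nat := #|[set t | c t != 0]|.

Definition supp (c : vecL) : {set L} := [set t | c t != 0].

Definition minwt_codeword (C : {set vecL}) (c : vecL) : bool :=
  [&& c \in C, c != 0 & [forall c' in C, (c' != 0) ==> (wt c <= wt c')%N]].

Definition blocks (m : nat) : {set {set L}} :=
  [set supp c | c in [set c | minwt_codeword (codeC m) c]].

Definition incvec (B : {set L}) : vecL := [ffun t => if t \in B then 1 else 0].

Definition in_span (S : {set vecL}) (v : vecL) : Prop :=
  exists lam : vecL -> 'F_3, forall t : L, v t = \sum_(w in S) lam w * w t.

Definition designCode (m : nat) : {set vecL} := [set incvec B | B in blocks m].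

Definition is_F3basis (n : nat) (b : 'I_n -> L) : Prop :=
  forall x y : 'I_n -> 'F_3,
    \sum_(i < n) F3toL (x i) * b i = \sum_(i < n) F3toL (y i) * b i -> x = y.

(* R_3(r,n) in coordinates w.r.t. the basis b: functions given by a
   polynomial over F_3 in n variables of total degree <= r *)
Definition inRM (r n : nat) (b : 'I_n -> L) (v : vecL) : Prop :=
  exists P : {mpoly 'F_3[n]}, (msize P <= r.+1)%N /\
    forall x : 'I_n -> 'F_3, v (\sum_(i < n) F3toL (x i) * b i) = P.@[x].

End Defs.

From HB Require Import structures.
From mathcomp Require Import all_boot all_order all_algebra all_field.
From mathcomp Require Import mpoly.
From mathcomp Require Import zify.
Set Implicit Arguments. Unset Strict Implicit. Unset Printing Implicit Defensive.
Import GRing.Theory.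
Local Open Scope ring_scope.

(* Write t = sum_i x_i b_i with coordinates x in F_3^(2m).
   Since the Frobenius t |-> t^(3^k) is F_3-linear, t^(3^m+1) = t^(3^m) * t is
   an L-combination of products of two coordinates, and every L-combination
   of F_3-polynomials of degree <= r is mapped by the trace (which is F_3-linear
   and takes values in F_3) to an F_3-polynomial of degree <= r.  Hence every
   codeword c of C(2m,3) is a polynomial of degree <= 2 in x.  In F_3 the
   indicator of z <> 0 is z^2, so the incidence vector of supp c is c^2, of
   degree <= 4, and so is every F_3-combination of such incidence vectors. *)

Definition RMfun (n r : nat) (f : ('I_n -> 'F_3) -> 'F_3) : Prop :=
  exists P : {mpoly 'F_3[n]}, (msize P <= r.+1)%N /\ forall x, f x = P.@[x].

Section PolynomialFunctions.
Variable n : nat.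
Implicit Types (r s : nat) (f g : ('I_n -> 'F_3) -> 'F_3).

Lemma RMfun_ext r f g : (forall x, f x = g x) -> RMfun r f -> RMfun r g.
Proof. by move=> fg [P [szP fP]]; exists P; split=> // x; rewrite -fg. Qed.

Lemma RMfun_mono r s f : (r <= s)%N -> RMfun r f -> RMfun s f.
Proof. by move=> rs [P [szP fP]]; exists P; split=> //; exact: leq_trans szP _. Qed.

Lemma RMfun_const r (c : 'F_3) : RMfun r (fun _ : 'I_n -> 'F_3 => c).
Proof.
exists c%:MP; split; last by move=> x; rewrite mevalC.
by rewrite msizeC; case: (c != 0).
Qed.

Lemma RMfun_coord (i : 'I_n) : RMfun 1 (fun x => x i).
Proof.
by exists 'X_i; split=> [|x]; [rewrite msizeX mdeg1 | rewrite mevalXU].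
Qed.

Lemma RMfun_add r f g : RMfun r f -> RMfun r g -> RMfun r (fun x => f x + g x).
Proof.
move=> [P [szP fP]] [Q [szQ gQ]]; exists (P + Q); split.
  by apply: leq_trans (msizeD_le _ _) _; rewrite geq_max szP szQ.
by move=> x; rewrite mevalD fP gQ.
Qed.

(* Degrees add under multiplication: msize (P * Q) = msize P + msize Q - 1. *)
Lemma RMfun_mul r s f g :
  RMfun r f -> RMfun s g -> RMfun (r + s) (fun x => f x * g x).
Proof.
move=> [P [szP fP]] [Q [szQ gQ]]; exists (P * Q); split; last first.
  by move=> x; rewrite mevalM fP gQ.
have [->|nzP] := eqVneq P 0; first by rewrite mul0r msize0.
have [->|nzQ] := eqVneq Q 0; first by rewrite mulr0 msize0.
rewrite msizeM // -subn1 leq_subLR add1n -addnS -addSn.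
exact: leq_add.
Qed.

Lemma RMfun_sum r (I : Type) (ix : seq I) (F : I -> ('I_n -> 'F_3) -> 'F_3) :
  (forall i, RMfun r (F i)) -> RMfun r (fun x => \sum_(i <- ix) F i x).
Proof.
move=> RMF; elim: ix => [|i ix IH].
  by apply: RMfun_ext (RMfun_const r 0) => x; rewrite big_nil.
by apply: RMfun_ext (RMfun_add (RMF i) IH) => x; rewrite big_cons.
Qed.

(* The indicator of z <> 0 in F_3 is z^2, so supports double the degree. *)
Lemma nonzero_indicator_F3 (z : 'F_3) : (if z != 0 then 1 else 0) = z * z.
Proof. by case: z => [[|[|[|k]]] lt_k3] //; apply/val_inj. Qed.

Lemma RMfun_support r f :
  RMfun r f -> RMfun (r + r) (fun x => if f x != 0 then 1 else 0).
Proof.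
by move=> RMf; apply: RMfun_ext (RMfun_mul RMf RMf) => x; rewrite nonzero_indicator_F3.
Qed.

End PolynomialFunctions.

Section CharacteristicThree.
Variable L : finFieldType.
Hypothesis char3 : 3%N \in [pchar L].

Local Notation iota := (F3toL L).

Lemma F3toLD (c d : 'F_3) : iota (c + d) = iota c + iota d.
Proof. by rewrite /F3toL -natrD -(GRing.natr_mod_pchar char3 (_ + _)). Qed.

Lemma F3toLM (c d : 'F_3) : iota (c * d) = iota c * iota d.
Proof. by rewrite /F3toL -natrM -(GRing.natr_mod_pchar char3 (_ * _)). Qed.

Lemma F3toL_sum (I : Type) (ix : seq I) (F : I -> 'F_3) :
  iota (\sum_(i <- ix) F i) = \sum_(i <- ix) iota (F i).
Proof. exact: (big_morph _ F3toLD). Qed.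

Lemma F3toL_inj : injective iota.
Proof.
suff le_inj (c d : 'F_3) : (c <= d)%N -> iota c = iota d -> c = d.
  move=> c d Ecd; case: (leqP c d) => [cd|/ltnW dc]; first exact: le_inj.
  exact/esym/le_inj.
move=> cd Ecd; apply: val_inj => /=.
have : (3 %| d - c)%N by rewrite (dvdn_pcharf char3) natrB // -!/(F3toL _ _) Ecd subrr.
have d_lt3 : (d < 3)%N := ltn_ord d.
by case/dvdnP=> k; lia.
Qed.

Lemma F3toLK : cancel iota (@LtoF3 L).
Proof.
move=> c; rewrite /LtoF3; case: pickP => [c' /eqP /F3toL_inj //|].
by move/(_ c); rewrite eqxx.
Qed.

Lemma frobD k (x y : L) : (x + y) ^+ (3 ^ k) = x ^+ (3 ^ k) + y ^+ (3 ^ k).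
Proof.
by apply: exprDn_pchar; rewrite (eq_pnat _ (pcharf_eq char3)) pnatX pnat_id.
Qed.

Lemma frob_sum k (I : Type) (ix : seq I) (F : I -> L) :
  (\sum_(i <- ix) F i) ^+ (3 ^ k) = \sum_(i <- ix) F i ^+ (3 ^ k).
Proof.
apply: (big_morph (fun x : L => x ^+ (3 ^ k))); first exact: frobD.
by rewrite expr0n expn_eq0.
Qed.

Lemma frob_F3 k c : iota c ^+ (3 ^ k) = iota c.
Proof.
elim: k => [|k IH]; first by rewrite expr1.
by rewrite expnSr exprM IH /F3toL -(pFrobenius_autE char3) pFrobenius_aut_nat.
Qed.

Lemma trace_sum s (I : Type) (ix : seq I) (F : I -> L) :
  trace3 s (\sum_(i <- ix) F i) = \sum_(i <- ix) trace3 s (F i).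
Proof.
apply: big_morph => [x y|]; first by rewrite -big_split; apply: eq_bigr => i _; apply: frobD.
by rewrite /trace3 big1 // => i _; rewrite expr0n expn_eq0.
Qed.

Lemma traceZ s c (x : L) : trace3 s (iota c * x) = iota c * trace3 s x.
Proof. by rewrite /trace3 mulr_sumr; apply: eq_bigr => i _; rewrite exprMn frob_F3. Qed.

Lemma cube_fixed_prime (z : L) : z ^+ 3 = z -> z = iota (LtoF3 z).
Proof.
move=> z3; suff [c ->] : exists c, z = iota c by rewrite F3toLK.
have : z * (z - 1) * (z + 1) == 0.
  by rewrite -mulrA -subr_sqr expr1n mulrBr mulr1 -exprS z3 subrr.
rewrite !mulf_eq0 subr_eq0 addr_eq0 => /orP [/orP [] |] /eqP ->.
- by exists 0.
- by exists 1.
- exists 2%:R; apply/eqP; rewrite eq_sym -subr_eq0 opprK.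
  by rewrite -(natrD L 2 1) (pcharf0 char3).
Qed.

Lemma trace_in_prime_field s (y : L) :
  #|L| = (3 ^ s)%N -> trace3 s y = iota (LtoF3 (trace3 s y)).
Proof.
move=> cardL; apply: cube_fixed_prime.
have shifted : \sum_(i < s) y ^+ (3 ^ i) ^+ 3 = \sum_(i < s) y ^+ (3 ^ bump 0 i).
  by apply: eq_bigr => i _; rewrite -exprM -expnSr.
have unroll : y + \sum_(i < s) y ^+ (3 ^ bump 0 i) = \sum_(i < s) y ^+ (3 ^ i) + y.
  pose F (i : 'I_s.+1) := y ^+ (3 ^ i).
  have := esym (@big_ord_recl L 0 +%R s F).
  by rewrite (@big_ord_recr L 0 +%R s F) /F /= expn0 expr1 -cardL expf_card.
rewrite -[3%N]expn1 /trace3 frob_sum expn1 shifted; apply: (addrI y).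
by rewrite unroll addrC.
Qed.

(* L-valued functions of F_3^n that are L-combinations of F_3-polynomial
   functions of degree <= r; the trace turns them into RMfun r. *)
Definition LinComb (n r : nat) (g : ('I_n -> 'F_3) -> L) : Prop :=
  exists (I : finType) (h : I -> ('I_n -> 'F_3) -> 'F_3) (w : I -> L),
    (forall j, RMfun r (h j)) /\ forall x, g x = \sum_j iota (h j x) * w j.

Section LinearCombinations.
Variable n : nat.
Implicit Types (r s : nat) (g : ('I_n -> 'F_3) -> L).

Lemma LinComb_ext r g1 g2 : (forall x, g1 x = g2 x) -> LinComb r g1 -> LinComb r g2.
Proof. by move=> E [I [h [w [RMh gE]]]]; exists I, h, w; split=> // x; rewrite -E. Qed.

Lemma LinComb_mono r s g : (r <= s)%N -> LinComb r g -> LinComb s g.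
Proof.
move=> rs [I [h [w [RMh gE]]]]; exists I, h, w; split=> // j.
exact: RMfun_mono (RMh j).
Qed.

Lemma LinComb_point (b : 'I_n -> L) : LinComb 1 (fun x => \sum_i iota (x i) * b i).
Proof. by exists 'I_n, (fun i x => x i), b; split=> // i; apply: RMfun_coord. Qed.

Lemma LinComb_scale r a g : LinComb r g -> LinComb r (fun x => a * g x).
Proof.
move=> [I [h [w [RMh gE]]]]; exists I, h, (fun j => a * w j); split=> // x.
by rewrite gE mulr_sumr; apply: eq_bigr => j _; rewrite mulrCA.
Qed.

Lemma LinComb_frob r k g : LinComb r g -> LinComb r (fun x => g x ^+ (3 ^ k)).
Proof.
move=> [I [h [w [RMh gE]]]]; exists I, h, (fun j => w j ^+ (3 ^ k)); split=> // x.
by rewrite gE frob_sum; apply: eq_bigr => j _; rewrite exprMn frob_F3.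
Qed.

Lemma LinComb_add r g1 g2 : LinComb r g1 -> LinComb r g2 -> LinComb r (fun x => g1 x + g2 x).
Proof.
move=> [I1 [h1 [w1 [RMh1 E1]]]] [I2 [h2 [w2 [RMh2 E2]]]].
exists (I1 + I2)%type, (fun p => match p with inl i => h1 i | inr j => h2 j end).
exists (fun p => match p with inl i => w1 i | inr j => w2 j end).
by split=> [[]|x] //; rewrite big_sumType E1 E2.
Qed.

Lemma LinComb_mul r s g1 g2 :
  LinComb r g1 -> LinComb s g2 -> LinComb (r + s) (fun x => g1 x * g2 x).
Proof.
move=> [I1 [h1 [w1 [RMh1 E1]]]] [I2 [h2 [w2 [RMh2 E2]]]].
exists (I1 * I2)%type, (fun p x => h1 p.1 x * h2 p.2 x), (fun p => w1 p.1 * w2 p.2).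
split=> [p|x]; first exact: RMfun_mul.
rewrite E1 E2 mulr_suml -(pair_bigA _ (fun i j => iota (h1 i x * h2 j x) * (w1 i * w2 j))).
apply: eq_bigr => i _; rewrite mulr_sumr; apply: eq_bigr => j _.
by rewrite F3toLM mulrACA.
Qed.

(* Tr(sum_j iota(h_j x) w_j) = sum_j h_j x * Tr(w_j), read back in F_3. *)
Lemma LinComb_trace s r g : #|L| = (3 ^ s)%N ->
  LinComb r g -> RMfun r (fun x => LtoF3 (trace3 s (g x))).
Proof.
move=> cardL [I [h [w [RMh gE]]]].
pose tw j := LtoF3 (trace3 s (w j)).
have RMsum : RMfun r (fun x => \sum_(j <- index_enum I) h j x * tw j).
  apply: RMfun_sum => j; have := RMfun_mul (RMh j) (RMfun_const n 0 (tw j)).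
  by rewrite addn0.
apply: RMfun_ext RMsum => x; rewrite gE trace_sum -[LHS]F3toLK F3toL_sum.
congr LtoF3; apply: eq_bigr => j _.
by rewrite traceZ (trace_in_prime_field _ cardL) F3toLM.
Qed.

End LinearCombinations.

Variable m : nat.
Hypothesis cardL : #|L| = (3 ^ (2 * m))%N.
Variable b : 'I_(2 * m) -> L.

Local Notation point := (fun x : 'I_(2 * m) -> 'F_3 => \sum_i iota (x i) * b i).

Lemma codeword_quadratic (c : {ffun L -> 'F_3}) :
  c \in codeC L m -> RMfun 2 (fun x => c (point x)).
Proof.
rewrite inE => /existsP [a /existsP [a1 /existsP [h /andP [_ /forallP cE]]]].
have quad : LinComb 2 (fun x => a * point x ^+ (3 ^ m + 1) + a1 * point x).
  apply: LinComb_add.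
    apply: LinComb_scale.
    apply: LinComb_ext (LinComb_mul (LinComb_frob m (LinComb_point b)) (LinComb_point b)).
    by move=> x; rewrite exprD expr1.
  by apply: (@LinComb_mono _ 1) => //; apply/LinComb_scale/LinComb_point.
apply: RMfun_ext (RMfun_add (LinComb_trace cardL quad) (RMfun_const _ 2 h)) => x.
by rewrite (eqP (cE _)).
Qed.

Lemma support_quartic (c : {ffun L -> 'F_3}) :
  c \in codeC L m -> RMfun 4 (fun x => incvec (supp c) (point x)).
Proof.
move=> /codeword_quadratic /RMfun_support; apply: RMfun_ext => x.
by rewrite ffunE inE.
Qed.

End CharacteristicThree.

Lemma span_RMfun (L : finFieldType) n r (pt : ('I_n -> 'F_3) -> L)
    (S : {set {ffun L -> 'F_3}}) (v : {ffun L -> 'F_3}) :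
  (forall w, w \in S -> RMfun r (fun x => w (pt x))) ->
  in_span S v -> RMfun r (fun x => v (pt x)).
Proof.
move=> RMS [lam vE].
pose F w := if w \in S then fun x => lam w * w (pt x) else fun _ => 0.
have RMF w : RMfun r (F w).
  rewrite /F; case: ifP => [/RMS RMw|_]; last exact: RMfun_const.
  by rewrite -[r]add0n; apply: RMfun_mul (RMfun_const _ 0 (lam w)) RMw.
apply: RMfun_ext (RMfun_sum (index_enum _) RMF) => x.
by rewrite vE [RHS]big_mkcond; apply: eq_bigr => w _; rewrite /F; case: (w \in S).
Qed.

(* Every block of D_d is the support of a codeword, so its incidence vector has
   degree <= 4. *)
Theorem mainTheorem3 (m : nat) (L : finFieldType)
    (hm : (2 <= m)%N) (hchar : 3%N \in [pchar L]) (hcard : #|L| = (3 ^ (2 * m))%N)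
    (b : 'I_(2 * m) -> L) (hb : is_F3basis b) (v : {ffun L -> 'F_3}) :
  in_span (designCode L m) v -> inRM 4 b v.
Proof.
apply: span_RMfun => _ /imsetP [B /imsetP [c mincw ->] ->].
move: mincw; rewrite inE => /andP [c_in_code _].
exact: support_quartic.
Qed.
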